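(* Let $\Lambda=(W_j,\Lambda_j,v_j)_{j\in\mathbb{J}}$ be a Parseval g-fusion frame for $H$, let $\mathbb{I}\subseteq\mathbb{J}$, $\mathbb{I}^c=\mathbb{J}\setminus\mathbb{I}$, and for $\mathbb{K}\subseteq\mathbb{J}$ set $S_{\mathbb{K}}f:=\sum_{j\in\mathbb{K}}v_j^2\pi_{W_j}\Lambda_j^*\Lambda_j\pi_{W_j}f$. Then, in the order of self-adjoint operators, (I) $0\le S_{\mathbb{I}}-S_{\mathbb{I}}^2\le\frac14 id_H$; (II) $\frac12 id_H\le S_{\mathbb{I}}^2+S_{\mathbb{I}^c}^2\le\frac32 id_H$.
   Context: $H$ is a separable Hilbert space, $\mathbb{J}\subseteq\mathbb{Z}$, $\{H_j\}_{j\in\mathbb{J}}$ are separable Hilbert spaces, $\Lambda_j\in\mathcal{B}(H,H_j)$, $W_j$ are closed subspaces of $H$, $v_j>0$, and $\pi_V$ denotes the orthogonal projection onto a closed subspace $V$. The triple $\Lambda=(W_j,\Lambda_j,v_j)$ is a Parseval g-fusion frame for $H$ if $\sum_{j\in\mathbb{J}}v_j^2\Vert\Lambda_j\pi_{W_j}f\Vert^2=\Vert f\Vert^2$ for all $f\in H$. $T\le U$ means $\langle Tf,f\rangle\le\langle Uf,f\rangle$ for all $f$. *)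

From HB Require Import structures.
From mathcomp Require Import all_boot all_order all_algebra.
From mathcomp Require Import complex.
From mathcomp Require Import reals.
From Stdlib Require Import ClassicalEpsilon.
Set Implicit Arguments. Unset Strict Implicit. Unset Printing Implicit Defensive.
Import Order.TTheory GRing.Theory Num.Theory.
Local Open Scope ring_scope.
Local Open Scope complex_scope.

Section Hilbert.
Variable R : realType.
Local Notation C := R[i].
Variable H : lmodType C.
Variable ip : H -> H -> C.

(* inner product: linear in the first argument, conjugate symmetric,
   positive definite (the order on C is x <= y iff y - x is real >= 0) *)
Definition is_inner_product :=
  [/\ forall (a : C) (x y z : H), ip (a *: x + y) z = a * ip x z + ip y z,
      forall x y : H, ip y x = (ip x y)^*,
      forall x : H, 0 <= ip x x
    & forall x : H, ip x x = 0 -> x = 0].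

Definition hnorm (x : H) : R := Num.sqrt (complex.Re (ip x x)).

Definition converges (u : nat -> H) (l : H) :=
  forall e : R, 0 < e -> exists N : nat, forall n, (N <= n)%N -> hnorm (u n - l) < e.

Definition cauchy (u : nat -> H) :=
  forall e : R, 0 < e -> exists N : nat, forall n m, (N <= n)%N -> (N <= m)%N ->
    hnorm (u n - u m) < e.

Definition complete := forall u, cauchy u -> exists l, converges u l.

Definition separable :=
  exists d : nat -> H, forall (f : H) (e : R), 0 < e -> exists n, hnorm (f - d n) < e.

Definition is_hilbert := is_inner_product /\ complete.

(* the limit of a sequence (an arbitrary value if it does not converge) *)
Definition hlim (u : nat -> H) : H := epsilon (inhabits 0) (converges u).

Definition closed_subspace (W : H -> Prop) :=
  [/\ W 0,
      forall (a : C) (x y : H), W x -> W y -> W (a *: x + y)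
    & forall (u : nat -> H) (l : H), (forall n, W (u n)) -> converges u l -> W l].

Definition is_orth_proj (W : H -> Prop) (P : H -> H) :=
  forall f : H, W (P f) /\ forall w : H, W w -> ip (f - P f) w = 0.

Definition op_le (T U : H -> H) := forall f : H, ip (T f) f <= ip (U f) f.

End Hilbert.

Definition bounded (R : realType) (H K : lmodType R[i])
  (ipH : H -> H -> R[i]) (ipK : K -> K -> R[i]) (A : H -> K) :=
  exists c : R, forall f : H, hnorm ipK (A f) <= c * hnorm ipH f.

Definition is_adjoint (R : realType) (H K : lmodType R[i])
  (ipH : H -> H -> R[i]) (ipK : K -> K -> R[i]) (A : H -> K) (B : K -> H) :=
  forall (f : H) (g : K), ipK (A f) g = ipH f (B g).

Definition zwin (n : nat) : seq int := [seq (i%:Z - n%:Z)%R | i <- iota 0 (n + n).+1].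

(* sum over an index set K ⊆ Z of nonnegative reals equals s
   (terms are nonnegative, so the symmetric partial sums suffice) *)
Definition real_series_to (R : realType) (K : {pred int}) (a : int -> R) (s : R) :=
  forall e : R, 0 < e -> exists N : nat, forall n, (N <= n)%N ->
    `|(\sum_(j <- zwin n | j \in K) a j) - s| < e.

Definition hsum (R : realType) (H : lmodType R[i]) (ip : H -> H -> R[i])
  (K : {pred int}) (x : int -> H) : H :=
  hlim ip (fun n => \sum_(j <- zwin n | j \in K) x j).

(* Parseval g-fusion frame (W_j, Lam_j, v_j)_{j in J}; P j = pi_{W_j} *)
Definition parseval_gfusion (R : realType) (H : lmodType R[i]) (ip : H -> H -> R[i])
  (J : {pred int}) (Hj : int -> lmodType R[i]) (ipj : forall j, Hj j -> Hj j -> R[i])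
  (Lam : forall j, H -> Hj j) (P : int -> H -> H) (v : int -> R) :=
  forall f : H, real_series_to J (fun j => v j ^+ 2 * hnorm (ipj j) (Lam j (P j f)) ^+ 2)
                                  (hnorm ip f ^+ 2).

Definition S_op (R : realType) (H : lmodType R[i]) (ip : H -> H -> R[i])
  (Hj : int -> lmodType R[i]) (Lam : forall j, H -> Hj j) (Lams : forall j, Hj j -> H)
  (P : int -> H -> H) (v : int -> R) (K : {pred int}) (f : H) : H :=
  hsum ip K (fun j => (v j ^+ 2)%:C *: P j (Lams j (Lam j (P j f)))).

(* Let T_j f := v_j^2 pi_j Lam_j^* Lam_j pi_j f, so that
   <T_j f, g> = v_j^2 <Lam_j pi_j f, Lam_j pi_j g>.  If g is a finite partial sum
   of S_K f = sum_{j in K} T_j f, AM-GM on each term and Bessel's inequality for g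
   itself (a consequence of the Parseval identity) give
   |g|^2 <= sum_{j in K} v_j^2 |Lam_j pi_j f|^2.  Hence the partial sums are Cauchy,
   S_K f exists by completeness, and in the limit S_K is symmetric with
   |S_K f|^2 <= <S_K f, f> (that is, 0 <= S_K <= id), while
   <S_I f, f> + <S_Ic f, f> = |f|^2 by Parseval.  Cauchy-Schwarz then gives
   <S f - S^2 f, f> <= |S f| |f| - |S f|^2 <= |f|^2 / 4, and from
   |f|^2 <= (|S_I f| + |S_Ic f|) |f| also |S_I f|^2 + |S_Ic f|^2 >= |f|^2 / 2; the
   upper bound holds even with 1 in place of 3/2. *)

From Pilot Require Import Defs.
From HB Require Import structures.
From mathcomp Require Import all_boot all_order all_algebra.
From mathcomp Require Import complex reals.
From mathcomp Require Import classical_sets topology normedtype sequences.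
From mathcomp Require Import ring lra zify.
From Stdlib Require Import ClassicalEpsilon.
Set Implicit Arguments. Unset Strict Implicit. Unset Printing Implicit Defensive.
Import Order.TTheory GRing.Theory Num.Theory numFieldNormedType.Exports.
Local Open Scope complex_scope.
Local Open Scope ring_scope.
Local Open Scope classical_set_scope.
Local Notation Re := complex.Re.

Section ComplexParts.
Variable R : realType.
Implicit Types x y c : R[i].

Lemma ReD x y : Re (x + y) = Re x + Re y.
Proof. by case: x => a b; case: y. Qed.

Lemma Re_sum (I : Type) (r : seq I) (Q : pred I) (F : I -> R[i]) :
  Re (\sum_(j <- r | Q j) F j) = \sum_(j <- r | Q j) Re (F j).
Proof. exact: (big_morph _ ReD (erefl : Re (0 : R[i]) = 0)). Qed.

Lemma ReJ x : Re x^* = Re x.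
Proof. by case: x. Qed.

Lemma ReMJ c x : Re (c * x^*) = Re (c^* * x).
Proof. by case: c => a b; case: x => p q /=; ring. Qed.

Lemma conjC_realM (a : R) x : (a%:C * x)^* = a%:C * x^*.
Proof. by case: x => p q /=; congr (_ +i* _); ring. Qed.

Lemma Re_realM (a : R) x : Re (a%:C * x) = a * Re x.
Proof. by case: x => p q /=; ring. Qed.

Lemma complex_eq_Re x y : (forall c, Re (c * x) = Re (c * y)) -> x = y.
Proof.
case: x y => a b [a' b'] eqRe.
move: (eqRe 1) (eqRe (- 'i%C)) => /= eq_a eq_b.
by congr (_ +i* _); lra.
Qed.

Lemma conjC_fixed_real x : x^* = x -> x = (Re x)%:C.
Proof. by case: x => a b [eq_b]; congr (_ +i* _); lra. Qed.

End ComplexParts.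

Lemma cvgn_epsilonP (R : realType) (u : nat -> R) (a : R) :
  (forall e : R, 0 < e -> exists N : nat, forall n, (N <= n)%N -> `|u n - a| < e)
  <-> u @ \oo --> a.
Proof.
split=> [h|/cvgrPdist_lt h e /h [N _ hN]].
  by apply/cvgrPdist_lt => e /h [N hN]; exists N => // n /= Nn; rewrite distrC; apply: hN.
by exists N => n Nn; rewrite distrC; apply: hN.
Qed.

Section InnerProduct.
Variables (R : realType) (H : lmodType R[i]) (ip : H -> H -> R[i]).
Hypothesis ip_inner : is_inner_product ip.
Implicit Types x y z f g : H.

Lemma ipDl x y z : ip (x + y) z = ip x z + ip y z.
Proof. by case: ip_inner => ipl _ _ _; rewrite -(scale1r x) ipl mul1r scale1r. Qed.

Lemma ip0l z : ip 0 z = 0.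
Proof. by apply: (@addrI _ (ip 0 z)); rewrite addr0 -ipDl addr0. Qed.

Lemma ipZl a x z : ip (a *: x) z = a * ip x z.
Proof. by case: ip_inner => ipl _ _ _; rewrite -(addr0 (a *: x)) ipl ip0l addr0. Qed.

Lemma ipNl x z : ip (- x) z = - ip x z.
Proof. by rewrite -scaleN1r ipZl mulN1r. Qed.

Lemma ipBl x y z : ip (x - y) z = ip x z - ip y z.
Proof. by rewrite ipDl ipNl. Qed.

Lemma ip_suml (I : Type) (r : seq I) (Q : pred I) (F : I -> H) z :
  ip (\sum_(j <- r | Q j) F j) z = \sum_(j <- r | Q j) ip (F j) z.
Proof. exact: (big_morph (ip^~ z) (fun x y => ipDl x y z) (ip0l z)). Qed.

Lemma ipC x y : ip y x = (ip x y)^*.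
Proof. by case: ip_inner => _ ipJ _ _; rewrite ipJ. Qed.

Lemma ipZr a x z : ip x (a *: z) = a^* * ip x z.
Proof. by rewrite ipC ipZl rmorphM /= -ipC. Qed.

Lemma ip0r z : ip z 0 = 0.
Proof. by rewrite ipC ip0l conjC0. Qed.

Lemma hnorm_ge0 x : 0 <= hnorm ip x.
Proof. exact: sqrtr_ge0. Qed.

Lemma ipxx x : ip x x = (hnorm ip x ^+ 2)%:C.
Proof.
case: ip_inner => _ _ /(_ x) + _; rewrite lecE => /andP[/eqP Im0 Re_ge0].
by rewrite sqr_sqrtr //; case: (ip x x) Im0 => a b /= ->.
Qed.

Lemma hnorm_eq0 x : hnorm ip x = 0 -> x = 0.
Proof. by case: ip_inner => _ _ _ definite x0; apply: definite; rewrite ipxx x0 expr0n. Qed.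

Lemma hnormN x : hnorm ip (- x) = hnorm ip x.
Proof. by rewrite /hnorm -scaleN1r ipZl ipZr rmorphN1 !mulN1r opprK. Qed.

Lemma ip_scale_real (a : R) f : ip (a%:C *: f) f = (a * hnorm ip f ^+ 2)%:C.
Proof. by rewrite ipZl ipxx -rmorphM. Qed.

Definition rip x y := Re (ip x y).

Lemma rip_xx x : rip x x = hnorm ip x ^+ 2.
Proof. by rewrite /rip ipxx. Qed.

Lemma ripC x y : rip x y = rip y x.
Proof. by rewrite /rip ipC ReJ. Qed.

Lemma ripDl x y z : rip (x + y) z = rip x z + rip y z.
Proof. by rewrite /rip ipDl ReD. Qed.

Lemma ripBl x y z : rip (x - y) z = rip x z - rip y z.
Proof. by rewrite /rip ipBl; case: (ip x z) (ip y z) => ? ? []. Qed.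

Lemma ripDr x y z : rip z (x + y) = rip z x + rip z y.
Proof. by rewrite ripC ripDl !(ripC z). Qed.

Lemma ripZl_real (t : R) x z : rip (t%:C *: x) z = t * rip x z.
Proof. by rewrite /rip ipZl Re_realM. Qed.

Lemma ripZr_real (t : R) x z : rip z (t%:C *: x) = t * rip z x.
Proof. by rewrite ripC ripZl_real ripC. Qed.

Lemma ReM_ip c x g : Re (c * ip x g) = rip x (c^* *: g).
Proof. by rewrite /rip ipZr conjCK. Qed.

Lemma rip_sqr_le x y : rip x y ^+ 2 <= hnorm ip x ^+ 2 * hnorm ip y ^+ 2.
Proof.
have [y0|y_neq0] := eqVneq (hnorm ip y) 0.
  by rewrite y0 (hnorm_eq0 y0) /rip ip0r /= !expr0n /= mulr0.
set c := rip x y; set n := hnorm ip y ^+ 2.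
have n_gt0 : 0 < n by rewrite exprn_gt0 // lt_def y_neq0 hnorm_ge0.
have c_div : c / n * n = c by rewrite divfK ?gt_eqF.
(* expand 0 <= |x + t y|^2 at the minimising t = - c / n *)
have := sqr_ge0 (hnorm ip (x + (- (c / n))%:C *: y)).
rewrite -[hnorm ip (x + _) ^+ 2]rip_xx ripDl !ripDr !ripZl_real !ripZr_real.
rewrite !rip_xx (ripC y x) -/c -/n.
move: (c / n) c_div => d c_div; nra.
Qed.

Lemma norm_rip_le x y : `|rip x y| <= hnorm ip x * hnorm ip y.
Proof.
have := rip_sqr_le x y; have := mulr_ge0 (hnorm_ge0 x) (hnorm_ge0 y).
rewrite -exprMn; move: (_ * _) => p p_ge0.
by case: ler0P => _; nra.
Qed.

Lemma rip_le x y : rip x y <= hnorm ip x * hnorm ip y.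
Proof. exact: le_trans (ler_norm _) (norm_rip_le x y). Qed.

Lemma orth_proj_sym (W : H -> Prop) (Q : H -> H) :
  is_orth_proj ip W Q -> forall u g, ip (Q u) g = ip u (Q g).
Proof.
move=> Qproj u g; have [Wu perp_u] := Qproj u; have [Wg perp_g] := Qproj g.
have e_u : ip u (Q g) = ip (Q u) (Q g) by apply/eqP; rewrite -subr_eq0 -ipBl perp_u.
have e_g : ip g (Q u) = ip (Q g) (Q u) by apply/eqP; rewrite -subr_eq0 -ipBl perp_g.
by rewrite e_u ipC e_g -ipC.
Qed.

Lemma converges_rip (u : nat -> H) l g :
  converges ip u l -> (fun n => rip (u n) g) @ \oo --> rip l g.
Proof.
move=> ul; apply/cvgn_epsilonP => e e_gt0.
have g1_gt0 : 0 < hnorm ip g + 1 by rewrite ltr_wpDl ?hnorm_ge0.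
have [N hN] := ul (e / (hnorm ip g + 1)) (divr_gt0 e_gt0 g1_gt0).
exists N => n /hN; rewrite ltr_pdivlMr // -ripBl => un_l.
apply: le_lt_trans (norm_rip_le _ _) (le_lt_trans _ un_l).
by rewrite ler_wpM2l ?hnorm_ge0 ?lerDl.
Qed.

Lemma hnorm_cvg_le (u : nat -> H) l (M : R) :
  converges ip u l -> (forall n, hnorm ip (u n) <= M) -> hnorm ip l <= M.
Proof.
move=> ul uM; have M_ge0 : 0 <= M := le_trans (hnorm_ge0 _) (uM 0%N).
have : hnorm ip l ^+ 2 <= M * hnorm ip l.
  rewrite -rip_xx; apply: (cvgr_to_le (converges_rip (g := l) ul)); apply: nearW => n.
  exact: le_trans (rip_le _ _) (ler_wpM2r (hnorm_ge0 _) (uM n)).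
have := hnorm_ge0 l; nra.
Qed.

End InnerProduct.

Section Effects.
Variables (R : realType) (H : lmodType R[i]) (ip : H -> H -> R[i]).
Hypothesis ip_inner : is_inner_product ip.

(* a self-adjoint S with S^2 <= S, that is 0 <= S <= id *)
Definition is_effect (S : H -> H) :=
  (forall f g, ip (S g) f = ip g (S f)) /\
  (forall f, hnorm ip (S f) ^+ 2 <= rip ip (S f) f).

Lemma ip_effect_real S : is_effect S -> forall f, ip (S f) f = (rip ip (S f) f)%:C.
Proof. by move=> [S_sym _] f; apply: conjC_fixed_real; rewrite -(ipC ip_inner) S_sym. Qed.

Lemma ip_effect_sqr S : is_effect S -> forall f, ip (S (S f)) f = (hnorm ip (S f) ^+ 2)%:C.
Proof. by move=> [S_sym _] f; rewrite S_sym (ipxx ip_inner). Qed.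

Variables S T : H -> H.
Hypotheses (S_effect : is_effect S) (T_effect : is_effect T).
Hypothesis ST_id : forall f, rip ip (S f) f + rip ip (T f) f = hnorm ip f ^+ 2.

Lemma effect_sub_sqr_ge0 : op_le ip (fun _ => 0) (fun f => S f - S (S f)).
Proof.
move=> f; rewrite (ip0l ip_inner) (ipBl ip_inner).
rewrite (ip_effect_real S_effect) (ip_effect_sqr S_effect).
by rewrite -rmorphB ler0c subr_ge0 S_effect.2.
Qed.

Lemma effect_sub_sqr_le_quarter :
  op_le ip (fun f => S f - S (S f)) (fun f => 4%:R^-1 *: f).
Proof.
move=> f; rewrite (ipBl ip_inner) (ip_effect_real S_effect) (ip_effect_sqr S_effect).
rewrite -rmorphB.
have -> : (4%:R^-1 : R[i]) = (4%:R^-1 : R)%:C by rewrite fmorphV rmorph_nat.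
rewrite (ip_scale_real ip_inner) lecR.
have := rip_le ip_inner (S f) f; have := hnorm_ge0 ip (S f); have := hnorm_ge0 ip f.
move: (rip ip _ _) (hnorm ip (S f)) (hnorm ip f) => a x F x_ge0 F_ge0 a_le.
have := sqr_ge0 (F - 2%:R * x); nra.
Qed.

Lemma effect_sqr_add_ge_half :
  op_le ip (fun f => 2%:R^-1 *: f) (fun f => S (S f) + T (T f)).
Proof.
move=> f; rewrite (ipDl ip_inner) (ip_effect_sqr S_effect) (ip_effect_sqr T_effect) -rmorphD.
have -> : (2%:R^-1 : R[i]) = (2%:R^-1 : R)%:C by rewrite fmorphV rmorph_nat.
rewrite (ip_scale_real ip_inner) lecR.
have := rip_le ip_inner (S f) f; have := rip_le ip_inner (T f) f; have := ST_id f.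
have := hnorm_ge0 ip (S f); have := hnorm_ge0 ip (T f); have := hnorm_ge0 ip f.
move: (rip ip (S f) f) (rip ip (T f) f) (hnorm ip (S f)) (hnorm ip (T f)) (hnorm ip f).
move=> a b x y F F_ge0 y_ge0 x_ge0 ab_F b_le a_le.
have F_le : F <= x + y.
  have [->|F_neq0] := eqVneq F 0; first exact: addr_ge0.
  have F_gt0 : 0 < F by rewrite lt_def F_neq0.
  by rewrite -(ler_pM2r F_gt0); nra.
have := sqr_ge0 (x - y); nra.
Qed.

Lemma effect_sqr_add_le_3half :
  op_le ip (fun f => S (S f) + T (T f)) (fun f => (3%:R / 2%:R) *: f).
Proof.
move=> f; rewrite (ipDl ip_inner) (ip_effect_sqr S_effect) (ip_effect_sqr T_effect) -rmorphD.
have -> : (3%:R / 2%:R : R[i]) = (3%:R / 2%:R : R)%:C by rewrite fmorph_div !rmorph_nat.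
rewrite (ip_scale_real ip_inner) lecR.
have := S_effect.2 f; have := T_effect.2 f; have := ST_id f.
have := sqr_ge0 (hnorm ip f); lra.
Qed.

End Effects.

Lemma mem_zwin n j : (j \in zwin n) = (`|j| <= n)%N.
Proof.
apply/mapP/idP => [ [i i_in ->] | jn].
  by move: i_in; rewrite mem_iota; lia.
by exists (absz (j + n%:Z)); rewrite ?mem_iota; lia.
Qed.

Lemma sorted_zwin n : sorted <%R (zwin n).
Proof.
rewrite sorted_map; apply: sub_sorted (iota_ltn_sorted 0 _) => i k /=.
by rewrite ltrD2r ltz_nat.
Qed.

Lemma filter_zwin n m : (n <= m)%N -> [seq j <- zwin m | (`|j| <= n)%N] = zwin n.
Proof.
move=> nm; apply: (irr_sorted_eq lt_trans ltxx).
- by apply: sorted_filter; [exact: lt_trans | exact: sorted_zwin].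
- exact: sorted_zwin.
by move=> j; rewrite mem_filter !mem_zwin andb_idr // => /leq_trans->.
Qed.

Lemma big_zwin_split (V : nmodType) (Q : pred int) (F : int -> V) n m : (n <= m)%N ->
  \sum_(j <- zwin m | Q j) F j =
  \sum_(j <- zwin n | Q j) F j + \sum_(j <- zwin m | Q j && (n < `|j|)%N) F j.
Proof.
move=> nm; rewrite (bigID (fun j => `|j| <= n)%N) /= -(filter_zwin nm) big_filter_cond.
by congr (_ + _); apply: eq_bigl => j; [rewrite andbC | rewrite ltnNge].
Qed.

Lemma ler_sum_subpred (R : numDomainType) (r : seq int) (K J : {pred int}) (F : int -> R) :
  {subset K <= J} -> (forall j, 0 <= F j) ->
  \sum_(j <- r | j \in K) F j <= \sum_(j <- r | j \in J) F j.
Proof.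
move=> KJ F_ge0.
have -> : \sum_(j <- r | j \in K) F j = \sum_(j <- r | (j \in J) && (j \in K)) F j.
  by apply: eq_bigl => j; rewrite andb_idl // => /KJ.
by rewrite [X in _ <= X](bigID (mem K)) /= lerDl; apply: sumr_ge0.
Qed.

Section GFusionFrame.
Variables (R : realType) (H : lmodType R[i]) (ip : H -> H -> R[i]).
Hypotheses (ip_inner : is_inner_product ip) (H_complete : complete ip).
Variables (J : {pred int}) (Hj : int -> lmodType R[i]).
Variable ipj : forall j, Hj j -> Hj j -> R[i].
Arguments ipj : clear implicits.
Hypothesis ipj_inner : forall j, j \in J -> is_inner_product (ipj j).
Variables (Lam : forall j, H -> Hj j) (Lams : forall j, Hj j -> H).
Arguments Lams : clear implicits.
Hypothesis Lams_adj : forall j, j \in J -> is_adjoint ip (ipj j) (Lam j) (Lams j).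
Variables (W : int -> H -> Prop) (P : int -> H -> H).
Hypothesis P_proj : forall j, j \in J -> is_orth_proj ip (W j) (P j).
Variable v : int -> R.
Hypothesis frame : parseval_gfusion ip J ipj Lam P v.

Definition frame_op j f := (v j ^+ 2)%:C *: P j (Lams j (Lam j (P j f))).
Definition frame_coef j f := v j * hnorm (ipj j) (Lam j (P j f)).
Definition frame_sum n (K : {pred int}) f := \sum_(j <- zwin n | j \in K) frame_op j f.
Definition coef_sum n (K : {pred int}) f := \sum_(j <- zwin n | j \in K) frame_coef j f ^+ 2.

Local Notation S K := (S_op ip Lam Lams P v K).

Lemma ip_frame_op j f g : j \in J ->
  ip (frame_op j f) g = (v j ^+ 2)%:C * ipj j (Lam j (P j f)) (Lam j (P j g)).
Proof.
move=> jJ; rewrite (ipZl ip_inner) (orth_proj_sym ip_inner (P_proj jJ)).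
by rewrite (ipC ip_inner) -Lams_adj // -(ipC (ipj_inner jJ)).
Qed.

Lemma ip_frame_opC j f g : j \in J -> ip (frame_op j g) f = (ip (frame_op j f) g)^*.
Proof. by move=> jJ; rewrite !ip_frame_op // conjC_realM -(ipC (ipj_inner jJ)). Qed.

Lemma ip_frame_op_diag j f : j \in J -> ip (frame_op j f) f = (frame_coef j f ^+ 2)%:C.
Proof. by move=> jJ; rewrite ip_frame_op // (ipxx (ipj_inner jJ)) -rmorphM exprMn. Qed.

Lemma rip_frame_op_le j f g : j \in J ->
  rip ip (frame_op j f) g <= frame_coef j f * frame_coef j g.
Proof.
move=> jJ; rewrite /rip ip_frame_op // Re_realM mulrACA -expr2.
by rewrite ler_wpM2l ?sqr_ge0 // (rip_le (ipj_inner jJ)).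
Qed.

Lemma coef_sum_mono K f n m : (n <= m)%N -> coef_sum n K f <= coef_sum m K f.
Proof.
move=> nm; rewrite /coef_sum (big_zwin_split _ _ nm) lerDl.
by apply: sumr_ge0 => j _; apply: sqr_ge0.
Qed.

Lemma coef_sum_cvg g : (fun n => coef_sum n J g) @ \oo --> hnorm ip g ^+ 2.
Proof.
have -> : (fun n => coef_sum n J g) = (fun n =>
    \sum_(j <- zwin n | j \in J) v j ^+ 2 * hnorm (ipj j) (Lam j (P j g)) ^+ 2).
  by apply: boolp.funext => n; apply: eq_bigr => j _; rewrite exprMn.
by apply/cvgn_epsilonP; apply: frame.
Qed.

Lemma coef_sum_le_hnorm g n : coef_sum n J g <= hnorm ip g ^+ 2.
Proof.
apply: (cvgr_to_ge (coef_sum_cvg (g := g))).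
by apply: filterS (nbhs_infty_ge n) => m; apply: coef_sum_mono.
Qed.

(* AM-GM on each term, then Bessel for the partial sum itself *)
Lemma hnorm_frame_sum_le n K f : {subset K <= J} ->
  hnorm ip (frame_sum n K f) ^+ 2 <= coef_sum n K f.
Proof.
move=> KJ; set g := frame_sum n K f.
have expand : hnorm ip g ^+ 2 = \sum_(j <- zwin n | j \in K) rip ip (frame_op j f) g.
  by rewrite -(rip_xx ip_inner) {1}/g /rip (ip_suml ip_inner) Re_sum.
have amgm : \sum_(j <- zwin n | j \in K) rip ip (frame_op j f) g <=
    coef_sum n K f / 2%:R + coef_sum n K g / 2%:R.
  rewrite /coef_sum !mulr_suml -big_split /= ler_sum // => j jK.
  apply: le_trans (rip_frame_op_le _ _ (KJ _ jK)) _.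
  have := sqr_ge0 (frame_coef j f - frame_coef j g); nra.
have bessel : coef_sum n K g <= hnorm ip g ^+ 2.
  exact: le_trans (ler_sum_subpred _ KJ (fun j => sqr_ge0 _)) (coef_sum_le_hnorm g n).
lra.
Qed.

Lemma hnorm_frame_sum_sub_le K f n m : {subset K <= J} -> (n <= m)%N ->
  hnorm ip (frame_sum m K f - frame_sum n K f) ^+ 2 <= coef_sum m J f - coef_sum n J f.
Proof.
move=> KJ nm; set Kn : {pred int} := [pred j | (j \in K) && (n < `|j|)%N].
have KnJ : {subset Kn <= J} by move=> j /andP[/KJ].
have -> : frame_sum m K f - frame_sum n K f = frame_sum m Kn f.
  by rewrite /frame_sum (big_zwin_split _ _ nm) addrC addKr.
apply: le_trans (hnorm_frame_sum_le m f KnJ) _.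
rewrite lerBrDl /coef_sum [X in _ <= X](big_zwin_split _ _ nm) lerD2l.
apply: ler_sum_subpred => [j /andP[/KJ jJ nj]|j]; last exact: sqr_ge0.
by rewrite unfold_in /= jJ.
Qed.

Lemma frame_sum_cauchy K f : {subset K <= J} -> Defs.cauchy ip (fun n => frame_sum n K f).
Proof.
move=> KJ e e_gt0.
have [N hN] := (cvgn_epsilonP _ _).2 (coef_sum_cvg (g := f)) (e ^+ 2) (exprn_gt0 2 e_gt0).
have tail n : (N <= n)%N -> hnorm ip f ^+ 2 - coef_sum n J f < e ^+ 2.
  move=> Nn; rewrite -[X in X < _]ger0_norm ?subr_ge0 ?coef_sum_le_hnorm // distrC.
  exact: hN.
suff near_le n m : (N <= n)%N -> (n <= m)%N -> hnorm ip (frame_sum m K f - frame_sum n K f) < e.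
  exists N => n m Nn Nm; have [nm|/ltnW mn] := leqP n m.
    by rewrite -opprB (hnormN ip_inner) near_le.
  exact: near_le.
move=> Nn nm; have := hnorm_frame_sum_sub_le f KJ nm.
have := tail n Nn; have := coef_sum_le_hnorm f m.
have := hnorm_ge0 ip (frame_sum m K f - frame_sum n K f).
move: (hnorm ip _) (coef_sum m J f) (coef_sum n J f) => d cm cn; nra.
Qed.

Lemma S_op_cvg K f : {subset K <= J} -> converges ip (fun n => frame_sum n K f) (S K f).
Proof. by move=> KJ; apply: epsilon_spec; exact: H_complete (frame_sum_cauchy f KJ). Qed.

Lemma Re_ip_S_op_cvg K f g c : {subset K <= J} ->
  (fun n => \sum_(j <- zwin n | j \in K) Re (c * ip (frame_op j f) g)) @ \oo -->
  Re (c * ip (S K f) g).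
Proof.
move=> KJ; rewrite (ReM_ip ip_inner).
rewrite (@eq_cvg _ _ _ _ (fun n => rip ip (frame_sum n K f) (c^* *: g))).
  exact: (converges_rip ip_inner (g := c^* *: g) (S_op_cvg f KJ)).
move=> n; rewrite /frame_sum /rip (ip_suml ip_inner) Re_sum.
by apply: eq_bigr => j _; rewrite ReM_ip.
Qed.

Lemma S_op_sym K f g : {subset K <= J} -> ip (S K g) f = ip g (S K f).
Proof.
move=> KJ; apply: complex_eq_Re => c; rewrite (ipC ip_inner (S K f)) ReMJ.
apply: (cvg_unique (@Rhausdorff R) (Re_ip_S_op_cvg (f := g) (g := f) (c := c) KJ)).
rewrite /= (@eq_cvg _ _ _ _ (fun n =>
  \sum_(j <- zwin n | j \in K) Re (c^* * ip (frame_op j f) g))).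
  exact: Re_ip_S_op_cvg.
by move=> n; apply: eq_bigr => j /KJ jJ; rewrite ip_frame_opC // ReMJ.
Qed.

Lemma rip_S_op_cvg K f : {subset K <= J} ->
  (fun n => coef_sum n K f) @ \oo --> rip ip (S K f) f.
Proof.
move=> KJ; rewrite (@eq_cvg _ _ _ _ (fun n =>
  \sum_(j <- zwin n | j \in K) Re (1 * ip (frame_op j f) f))).
  by move: (Re_ip_S_op_cvg (f := f) (g := f) (c := 1) KJ); rewrite mul1r.
by move=> n; apply: eq_bigr => j /KJ jJ; rewrite mul1r ip_frame_op_diag.
Qed.

Lemma hnorm_S_op_le K f : {subset K <= J} -> hnorm ip (S K f) ^+ 2 <= rip ip (S K f) f.
Proof.
move=> KJ; set a := rip ip (S K f) f.
have coef_le n : coef_sum n K f <= a.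
  apply: (cvgr_to_ge (rip_S_op_cvg (f := f) KJ)).
  by apply: filterS (nbhs_infty_ge n) => m; apply: coef_sum_mono.
have a_ge0 : 0 <= a by apply: le_trans (coef_le 0%N); apply: sumr_ge0 => j _; apply: sqr_ge0.
have : hnorm ip (S K f) <= Num.sqrt a.
  apply: (hnorm_cvg_le ip_inner (S_op_cvg f KJ)) => n; apply: ler_wsqrtr.
  change (rip ip (frame_sum n K f) (frame_sum n K f) <= a); rewrite rip_xx //.
  exact: le_trans (hnorm_frame_sum_le n f KJ) (coef_le n).
have := sqr_sqrtr a_ge0; have := sqrtr_ge0 a; have := hnorm_ge0 ip (S K f).
move: (Num.sqrt a) (hnorm ip _) => s x; nra.
Qed.

Lemma S_op_effect K : {subset K <= J} -> is_effect ip (S K).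
Proof. by move=> KJ; split=> [f g|f]; [apply: S_op_sym | apply: hnorm_S_op_le]. Qed.

Lemma rip_S_op_compl (I : {pred int}) f : {subset I <= J} ->
  rip ip (S I f) f + rip ip (S [pred j | (j \in J) && (j \notin I)] f) f = hnorm ip f ^+ 2.
Proof.
move=> IJ; have IcJ : {subset [pred j | (j \in J) && (j \notin I)] <= J}.
  by move=> j /andP[].
apply: (cvg_unique (@Rhausdorff R)
  (cvgD (rip_S_op_cvg (f := f) IJ) (rip_S_op_cvg (f := f) IcJ))).
rewrite /= (@eq_cvg _ _ _ _ (fun n => coef_sum n J f)); first exact: coef_sum_cvg.
move=> n /=; rewrite /coef_sum [RHS](bigID (mem I)) /=.
congr (_ + _); apply: eq_bigl => j.
by rewrite andb_idl // => /IJ.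
Qed.

End GFusionFrame.

Theorem theorem3p4 (R : realType)
  (H : lmodType R[i]) (ip : H -> H -> R[i])
  (HH : is_hilbert ip) (Hsep : separable ip)
  (J : {pred int})
  (Hj : int -> lmodType R[i]) (ipj : forall j, Hj j -> Hj j -> R[i])
  (HHj : forall j, j \in J -> is_hilbert (ipj j) /\ separable (ipj j))
  (Lam : forall j, {linear H -> Hj j})
  (Hbd : forall j, j \in J -> bounded ip (ipj j) (Lam j))
  (Lams : forall j, Hj j -> H)
  (Hadj : forall j, j \in J -> is_adjoint ip (ipj j) (Lam j) (Lams j))
  (W : int -> H -> Prop)
  (HW : forall j, j \in J -> closed_subspace ip (W j))
  (P : int -> H -> H)
  (HP : forall j, j \in J -> is_orth_proj ip (W j) (P j))
  (v : int -> R) (Hv : forall j, j \in J -> 0 < v j)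
  (Hframe : parseval_gfusion ip J ipj Lam P v)
  (I : {pred int}) (HIJ : {subset I <= J}) :
  let S (K : {pred int}) := S_op ip Lam Lams P v K in
  let Ic : {pred int} := [pred j | (j \in J) && (j \notin I)] in
  (op_le ip (fun _ => 0) (fun f => S I f - S I (S I f))
   /\ op_le ip (fun f => S I f - S I (S I f)) (fun f => 4%:R^-1 *: f))
  /\
  (op_le ip (fun f => 2%:R^-1 *: f) (fun f => S I (S I f) + S Ic (S Ic f))
   /\ op_le ip (fun f => S I (S I f) + S Ic (S Ic f)) (fun f => (3%:R / 2%:R) *: f)).
Proof.
move=> S Ic; have [ip_inner H_complete] := HH.
have ipj_inner j : j \in J -> is_inner_product (ipj j) by case/HHj=> [[]].
have effect K : {subset K <= J} -> is_effect ip (S K).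
  exact: (S_op_effect ip_inner H_complete ipj_inner Hadj HP Hframe).
have IcJ : {subset Ic <= J} by move=> j /andP[].
have compl f : rip ip (S I f) f + rip ip (S Ic f) f = hnorm ip f ^+ 2.
  exact: (rip_S_op_compl ip_inner H_complete ipj_inner Hadj HP Hframe f HIJ).
split; split.
- exact: (effect_sub_sqr_ge0 ip_inner (effect I HIJ)).
- exact: (effect_sub_sqr_le_quarter ip_inner (effect I HIJ)).
- exact: (effect_sqr_add_ge_half ip_inner (effect I HIJ) (effect Ic IcJ) compl).
- exact: (effect_sqr_add_le_3half ip_inner (effect I HIJ) (effect Ic IcJ) compl).
Qed.
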